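(* Let $T=(V,E)$ be a tree on $n$ vertices, let $f=\{i,j\}$ be a pair of vertices with $d_{i,j}=d>1$, let $B=E\cup\{f\}$, and let $N=\mathrm{Min4PC}_T[B,B]$. Then $N$ has $n-1$ negative eigenvalues and exactly one positive eigenvalue.
   Context: $d_{i,j}$ is the distance in $T$ between vertices $i,j$; $\mathcal{V}_2$ is the set of 2-element subsets of $V$ (edges regarded as elements of $\mathcal{V}_2$). $\mathrm{Min4PC}_T$ is the $\binom n2\times\binom n2$ matrix indexed by $\mathcal{V}_2$ whose entry in row $\{i,j\}$, column $\{k,l\}$ is $\min\{d_{i,l}+d_{j,k},\ d_{i,k}+d_{j,l},\ d_{i,j}+d_{k,l}\}$. $M[B,B]$ denotes the principal submatrix with rows and columns indexed by $B$. *)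

From HB Require Import structures.
From mathcomp Require Import all_boot all_order all_algebra.
From mathcomp Require Import reals.
Set Implicit Arguments. Unset Strict Implicit. Unset Printing Implicit Defensive.
Import Order.TTheory GRing.Theory Num.Theory.

Section Defs.
Variable V : finType.
Variable adj : rel V.

Definition edges : {set {set V}} :=
  [set [set x; y] | x in V, y in V & adj x y].

Definition is_tree : Prop :=
  symmetric adj /\ irreflexive adj /\ (forall x y, connect adj x y)
  /\ #|edges| = #|V| - 1.

Definition walkb (k : nat) (x y : V) : bool :=
  [exists s : k.-tuple V, path adj x s && (last x s == y)].

(* graph distance: least k with a walk of length k from x to y
   (in a connected graph this is < #|V|, so the search range suffices) *)
Definition dist (x y : V) : nat :=
  find (fun k => walkb k x y) (iota 0 #|V|).

Definition min4pc_entry (i j k l : V) : nat :=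
  minn (dist i l + dist j k) (minn (dist i k + dist j l) (dist i j + dist k l)).

(* Min4PC entry for rows/columns indexed by 2-subsets p = {i,j}, q = {k,l};
   the value does not depend on the order chosen for the elements
   (x0 is only a default for nth and is irrelevant on 2-sets). *)
Definition Min4PC (x0 : V) (p q : {set V}) : nat :=
  let i := nth x0 (enum p) 0 in let j := nth x0 (enum p) 1 in
  let k := nth x0 (enum q) 0 in let l := nth x0 (enum q) 1 in
  min4pc_entry i j k l.

End Defs.

(* s is the multiset of eigenvalues (roots of the characteristic polynomial,
   with multiplicity) of the square matrix A *)
Definition eigenvalues_are (R : comNzRingType) (m : nat) (A : 'M[R]_m) (s : seq R) :=
  (char_poly A = \prod_(x <- s) ('X - x%:P))%R.

Definition Min4PC_sub (R : realType) (V : finType) (adj : rel V) (x0 : V)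
  (B : {set {set V}}) : 'M[R]_#|B| :=
  \matrix_(a < #|B|, b < #|B|) (Min4PC adj x0 (enum_val a) (enum_val b))%:R%R.

From mathcomp Require Import all_boot all_order all_algebra.
From mathcomp Require Import reals polyrcf.
From mathcomp Require Import ring lra zify.
Set Implicit Arguments. Unset Strict Implicit. Unset Printing Implicit Defensive.
Import Order.TTheory GRing.Theory Num.Theory.
Local Open Scope ring_scope.

(* Order the rows so that the pair f = {i, j} is row f0 and the other rows are the edges.
   In a tree, adjacent vertices are at distances from any root differing by exactly one
   (the parent map towards the root hits every edge, by counting), so the tree is
   bipartite.  Parity then gives Min4PC(e, e') = 2 for distinct edges e, e', and
   Min4PC(f, e) = d - 1 or d + 1, the value d - 1 occurring only for edges on the i-j
   geodesic, hence k <= d times.  So N + 2 I = U W with U, W of rank 3, and Sylvester's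
   determinant identity gives char N = (X + 2)^(n-3) q with
   q = (X + 2 - 2m)(X (X + 2) - Q) - 2 S^2, where m = n - 1 and S, Q are the sum and the
   sum of squares of the border entries.  Finally q(-2) = 8k(m - k) >= 0 and
   q(0) = -2(m(d - 1)^2 + 4(d - k)(m - k)) < 0, so q has two negative roots and one
   positive root. *)

Lemma det_mx33 (R : comNzRingType) (g : nat -> nat -> R) :
  \det (\matrix_(r < 3, s < 3) g r s) =
  g 0 0 * (g 1 1 * g 2 2 - g 1 2 * g 2 1)
  - g 0 1 * (g 1 0 * g 2 2 - g 1 2 * g 2 0)
  + g 0 2 * (g 1 0 * g 2 1 - g 1 1 * g 2 0).
Proof.
rewrite (expand_det_row _ 0) !big_ord_recl big_ord0 /cofactor.
rewrite !(expand_det_row _ 0) !big_ord_recl !big_ord0 /cofactor !det_mx11 !mxE /bump /=.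
rewrite !expr0 !exprS !expr0; ring.
Qed.

Lemma det_scalar_sub_mulmxC (R : comNzRingType) n k
    (U : 'M[R]_(n, k)) (W : 'M[R]_(k, n)) (x : R) :
  x ^+ k * \det (x%:M - U *m W) = x ^+ n * \det (x%:M - W *m U).
Proof.
have lower : block_mx 1%:M 0 (- W) x%:M *m block_mx x%:M U W 1%:M
             = block_mx x%:M U 0 (x%:M - W *m U).
  rewrite mulmx_block !mul1mx !mul0mx !mulmx1 !addr0 !mulNmx scalar_mxC addNr.
  by rewrite addrC.
have upper : block_mx 1%:M U 0 1%:M *m block_mx (x%:M - U *m W) 0 W 1%:M
             = block_mx x%:M U W 1%:M.
  by rewrite mulmx_block !mul1mx !mul0mx !mulmx1 ?addr0 !add0r subrK.
have := congr1 determinant lower; rewrite -upper !det_mulmx.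
rewrite det_lblock det_ublock det_ublock det_lblock !det1 !det_scalar.
by rewrite !mul1r mulr1 mulrC.
Qed.

Definition bordered_mx (R : nzRingType) n (f0 : 'I_n) (v : 'I_n -> R) : 'M[R]_n :=
  \matrix_(a, b) if a == b then 0 else if a == f0 then v b else if b == f0 then v a else 2.

Definition bordered_cubic (R : nzRingType) (m S Q : R) : {poly R} :=
  ('X + (2 - 2 * m)%:P) * ('X * ('X + 2%:P) - Q%:P) - (2 * S ^+ 2)%:P.

Section BorderedCharPoly.
Variables (R : idomainType) (n : nat) (f0 : 'I_n) (v : 'I_n -> R).
Hypothesis v_f0 : v f0 = 0.

Let e a : R := (a == f0)%:R.
Let c a : R := (a != f0)%:R.
Let U := \matrix_(a < n, r < 3) nth 0 [:: c a; e a; v a] r.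
Let W := \matrix_(r < 3, a < n) nth 0 [:: 2 * c a; v a + 2 * e a; e a] r.

Lemma bordered_mx_rank3 : bordered_mx f0 v = U *m W - 2%:M.
Proof.
apply/matrixP => a b; rewrite !mxE !big_ord_recl big_ord0 !mxE /= /e /c.
case: (eqVneq a b) => [<-|ab]; first by case: (eqVneq a f0) => [->|_]; rewrite ?v_f0 /=; ring.
case: (eqVneq a f0) => [af|af]; case: (eqVneq b f0) => [bf|bf] /=.
- by move: ab; rewrite af bf eqxx.
all: rewrite ?af ?bf ?v_f0 /=; ring.
Qed.

Lemma gram_rank3 : W *m U = \matrix_(r < 3, s < 3)
  nth 0 (nth [::] [:: [:: 2 * (n.-1)%:R; 0; 2 * \sum_a v a];
                      [:: \sum_a v a; 2; \sum_a v a ^+ 2]; [:: 0; 1; 0]] r) s.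
Proof.
have sum_ne (F : 'I_n -> R) : \sum_a F a = F f0 + \sum_(a | a != f0) F a.
  by rewrite (bigD1 f0).
apply/matrixP => r s; rewrite !mxE; under eq_bigr do rewrite !mxE.
case: r s => [[|[|[|//]]] _] [[|[|[|//]]] _] /=;
  rewrite ?(sum_ne v) ?(sum_ne (fun a => v a ^+ 2)) sum_ne /e /c eqxx /= ?v_f0;
  under eq_bigr => a /negbTE af do rewrite af /= ?(mulr0, mul0r, mulr1, addr0);
  rewrite ?(mulr0, mul0r, mulr1, mul1r, addr0, add0r, expr2, big1_eq) //.
all: by rewrite -?mulr_sumr // sumr_const cardC1 card_ord mulr_natr.
Qed.

Lemma char_poly_bordered_mx : (2 < n)%N ->
  char_poly (bordered_mx f0 v) =
  ('X + 2%:P) ^+ (n - 3) * bordered_cubic (n.-1)%:R (\sum_a v a) (\sum_a v a ^+ 2).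
Proof.
move=> n_gt2; set y := 'X + 2%:P.
have y_neq0 : y != 0 := monic_neq0 (monicXaddC 2).
have shift : char_poly_mx (bordered_mx f0 v) = y%:M - map_mx polyC U *m map_mx polyC W.
  rewrite /char_poly_mx bordered_mx_rank3 map_mxB map_mxM map_scalar_mx.
  by rewrite opprB addrA -raddfD.
have := det_scalar_sub_mulmxC (map_mx polyC U) (map_mx polyC W) y.
rewrite -shift -/(char_poly _) -map_mxM gram_rank3.
set S := \sum_a v a; set Q := \sum_a v a ^+ 2; set m : R := (n.-1)%:R.
pose G := [:: [:: 2 * m; 0; 2 * S]; [:: S; 2; Q]; [:: 0; 1; 0]].
pose g (r s : nat) := y *+ (r == s) - (nth 0 (nth [::] G r) s)%:P.
have -> : y%:M - map_mx polyC (\matrix_(r < 3, s < 3) nth 0 (nth [::] G r) s) =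
          \matrix_(r < 3, s < 3) g r s.
  by apply/matrixP => r s; rewrite !mxE.
rewrite det_mx33 /g /= -[in y ^+ n](subnK n_gt2) exprD => char_eq.
apply: (mulfI (expf_neq0 3 y_neq0)); rewrite char_eq /y /bordered_cubic.
rewrite !(rmorphM, rmorphD, rmorphB, rmorphN, rmorph_nat, rmorph0, rmorph1).
ring.
Qed.

End BorderedCharPoly.

Lemma monic_factor_root (R : idomainType) (p : {poly R}) r :
  p \is monic -> root p r ->
  exists2 q, q \is monic & p = q * ('X - r%:P) /\ size p = (size q).+1.
Proof.
move=> p_monic /factor_theorem [q p_eq].
have q_monic : q \is monic by rewrite -(monicMr q (monicXsubC r)) -p_eq.
exists q => //; split => //.
by rewrite p_eq size_Mmonic ?monic_neq0 ?monicXsubC // size_XsubC addn2.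
Qed.

Lemma monic_size2_XsubC (R : fieldType) (p : {poly R}) :
  p \is monic -> size p = 2%N -> exists r, p = 'X - r%:P.
Proof.
move=> p_monic p_size; have [r r_root] := poly2_root p_size.
have [q q_monic [p_eq]] := monic_factor_root p_monic r_root.
rewrite p_size => -[/esym/eqP q_size].
have /size_poly1P [c _ q_eq] := q_size.
move: q_monic; rewrite q_eq monicE lead_coefC => /eqP c1.
by exists r; rewrite p_eq q_eq c1 mul1r.
Qed.

Lemma monic_cubic_roots_sign (R : rcfType) (p : {poly R}) (a : R) :
  p \is monic -> size p = 4%N -> a < 0 -> 0 <= p.[a] -> p.[0] < 0 ->
  exists r1 r2 r3, [/\ r1 < 0, r2 < 0, 0 < r3 &
    p = ('X - r1%:P) * ('X - r2%:P) * ('X - r3%:P)].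
Proof.
move=> p_monic p_size a_lt0 pa_ge0 p0_lt0.
have [b p_large] : exists b, forall x, b <= x -> 1 <= p.[x].
  by rewrite -(monicP p_monic); apply: poly_pinfty_gt_lc; rewrite (monicP p_monic) ltr01.
have b_ge0 : 0 <= Num.max b 0 by rewrite le_max lexx orbT.
have pb_ge0 : 0 <= p.[Num.max b 0].
  by apply: le_trans ler01 (p_large _ _); rewrite le_max lexx.
have [r3 /andP [r3_ge0 _] r3_root] := poly_ivt b_ge0 (introT andP (conj (ltW p0_lt0) pb_ge0)).
have r3_gt0 : 0 < r3.
  by rewrite lt_neqAle r3_ge0 andbT; apply: contraTneq r3_root => <-; rewrite /root lt_eqF.
have [g g_monic [p_eq /eqP]] := monic_factor_root p_monic r3_root.
rewrite p_size eqSS => /eqP/esym g_size.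
have ga_le0 : g.[a] <= 0.
  by move: pa_ge0; rewrite p_eq hornerM !hornerE => ?; nra.
have g0_gt0 : 0 < g.[0].
  by move: p0_lt0; rewrite p_eq hornerM !hornerE => ?; nra.
have [r2 /andP [_ r2_le0] r2_root] := poly_ivt (ltW a_lt0) (introT andP (conj ga_le0 (ltW g0_gt0))).
have r2_lt0 : r2 < 0.
  by rewrite lt_neqAle r2_le0 andbT; apply: contraTneq r2_root => ->; rewrite /root gt_eqF.
have [h h_monic [g_eq /eqP]] := monic_factor_root g_monic r2_root.
rewrite g_size eqSS => /eqP/esym h_size.
have [r1 h_eq] := monic_size2_XsubC h_monic h_size.
have r1_lt0 : r1 < 0.
  by move: g0_gt0; rewrite g_eq h_eq hornerM !hornerE => ?; nra.
by exists r1, r2, r3; split => //; rewrite p_eq g_eq h_eq.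
Qed.

Lemma monic_mulBC (R : nzRingType) (p q : {poly R}) c :
  p \is monic -> q \is monic -> (1 < size p)%N -> (1 < size q)%N ->
  p * q - c%:P \is monic /\ size (p * q - c%:P) = (size p + size q).-1.
Proof.
move=> p_monic q_monic p_size q_size.
have pq_size : size (p * q) = (size p + size q).-1 by rewrite size_monicM ?monic_neq0.
have c_size : (size (- c%:P) < size (p * q)%R)%N.
  by rewrite size_polyN pq_size (leq_ltn_trans (size_polyC_leq1 c)) //; lia.
by rewrite monicE lead_coefDl // size_polyDl // pq_size -monicE rpredM.
Qed.

Lemma bordered_cubic_monic (R : nzRingType) (m S Q : R) :
  bordered_cubic m S Q \is monic /\ size (bordered_cubic m S Q) = 4%N.
Proof.
have [XX_monic XX_size] := monic_mulBC Q (monicX R) (monicXaddC 2)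
  (ltac:(by rewrite size_polyX)) (ltac:(by rewrite size_XaddC)).
rewrite size_polyX size_XaddC in XX_size.
have [] := monic_mulBC (2 * S ^+ 2) (monicXaddC (2 - 2 * m)) XX_monic
  (ltac:(by rewrite size_XaddC)) (ltac:(by rewrite XX_size)).
by rewrite size_XaddC XX_size.
Qed.

Lemma horner_bordered_cubic (R : comNzRingType) (m S Q x : R) :
  (bordered_cubic m S Q).[x] = (x + 2 - 2 * m) * (x * (x + 2) - Q) - 2 * S ^+ 2.
Proof. by rewrite !(hornerD, hornerN, hornerM, hornerX, hornerC) addrA. Qed.

Section TwoLevelBorder.
Variables (R : comNzRingType) (n : nat) (f0 : 'I_n) (K : {set 'I_n}) (d : R) (v : 'I_n -> R).
Hypotheses (v_f0 : v f0 = 0) (f0_notin_K : f0 \notin K).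
Hypothesis v_two_level : forall a, a != f0 -> v a = if a \in K then d - 1 else d + 1.

Let sum_if (P : pred 'I_n) (x : R) : \sum_a (if P a then x else 0) = x *+ #|P|.
Proof. by rewrite -big_mkcond sumr_const. Qed.

Lemma sum_two_level : \sum_a v a = (d + 1) * (n.-1)%:R - 2 * #|K|%:R.
Proof.
have v_eq a : v a = (if a != f0 then d + 1 else 0) - (if a \in K then 2 else 0).
  case: (eqVneq a f0) => [->|af]; first by rewrite v_f0 (negbTE f0_notin_K) subr0.
  by rewrite v_two_level //=; case: (a \in K); [ring | rewrite subr0].
by rewrite (eq_bigr _ (fun a _ => v_eq a)) sumrB !sum_if cardC1 card_ord !mulr_natr.
Qed.

Lemma sum_two_level_sq :
  \sum_a v a ^+ 2 = (d + 1) ^+ 2 * (n.-1)%:R - 4 * d * #|K|%:R.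
Proof.
have v2_eq a : v a ^+ 2 =
    (if a != f0 then (d + 1) ^+ 2 else 0) - (if a \in K then 4 * d else 0).
  case: (eqVneq a f0) => [->|af]; first by rewrite v_f0 (negbTE f0_notin_K) expr0n subr0.
  by rewrite v_two_level //=; case: (a \in K); [ring | rewrite subr0].
by rewrite (eq_bigr _ (fun a _ => v2_eq a)) sumrB !sum_if cardC1 card_ord !mulr_natr.
Qed.

End TwoLevelBorder.

Lemma bordered_mx_inertia (R : rcfType) n (f0 : 'I_n) (K : {set 'I_n}) (d : R)
    (v : 'I_n -> R) :
  v f0 = 0 -> (forall a, a != f0 -> v a = if a \in K then d - 1 else d + 1) ->
  f0 \notin K -> 1 < d -> d <= (n.-1)%:R -> #|K|%:R <= d ->
  exists s, eigenvalues_are (bordered_mx f0 v) s /\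
    count (fun x => x < 0) s = n.-1 /\ count (fun x => 0 < x) s = 1%N.
Proof.
move=> v_f0 v_two_level f0_notin_K d_gt1 d_le_m k_le_d.
set m : R := (n.-1)%:R in d_le_m *; set k : R := #|K|%:R in k_le_d *.
have n_gt2 : (2 < n)%N.
  suff : (1 < n.-1)%N by lia.
  by rewrite -(ltr_nat R) -/m; lra.
have k_ge0 : 0 <= k := ler0n _ _.
set q := bordered_cubic m ((d + 1) * m - 2 * k) ((d + 1) ^+ 2 * m - 4 * d * k).
have [q_monic q_size] :=
  bordered_cubic_monic m ((d + 1) * m - 2 * k) ((d + 1) ^+ 2 * m - 4 * d * k).
have q_m2 : 0 <= q.[-2].
  rewrite horner_bordered_cubic (_ : _ - _ = 8 * k * (m - k)); first nra.
  by ring.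
have q_0 : q.[0] < 0.
  rewrite horner_bordered_cubic (_ : _ - _ = - 2 * (m * (d - 1) ^+ 2 + 4 * ((d - k) * (m - k)))).
    have : 0 < m * (d - 1) ^+ 2 by rewrite mulr_gt0 ?exprn_gt0 ?subr_gt0 //; lra.
    have : 0 <= (d - k) * (m - k) by rewrite mulr_ge0 ?subr_ge0 //; lra.
    lra.
  by ring.
have m2_lt0 : -2 < 0 :> R by lra.
have [r1 [r2 [r3 [r1_lt0 r2_lt0 r3_gt0 q_eq]]]] :=
  monic_cubic_roots_sign q_monic q_size m2_lt0 q_m2 q_0.
exists (nseq (n - 3) (-2) ++ [:: r1; r2; r3]); split; [|split].
- rewrite /eigenvalues_are char_poly_bordered_mx //.
  rewrite (sum_two_level v_f0 f0_notin_K v_two_level).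
  rewrite (sum_two_level_sq v_f0 f0_notin_K v_two_level) -/m -/k q_eq.
  rewrite big_cat big_nseq iter_mulr_1 !big_cons big_nil /=.
  by rewrite polyCN opprK mulr1 !mulrA.
- rewrite count_cat count_nseq /= m2_lt0 r1_lt0 r2_lt0 (lt_gtF r3_gt0).
  by clear -n_gt2; lia.
- rewrite count_cat count_nseq /= (lt_gtF m2_lt0) (lt_gtF r1_lt0) (lt_gtF r2_lt0) r3_gt0.
  by rewrite mul0n.
Qed.

Local Close Scope ring_scope.

Lemma set2_eq (T : finType) (a b c e : T) :
  [set a; b] = [set c; e] -> (a = c /\ b = e) \/ (a = e /\ b = c).
Proof.
move=> eq_ab.
have : a \in [set c; e] by rewrite -eq_ab set21.
have : b \in [set c; e] by rewrite -eq_ab set22.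
have : c \in [set a; b] by rewrite eq_ab set21.
have : e \in [set a; b] by rewrite eq_ab set22.
by do 4!move=> /set2P [] ?; subst; auto.
Qed.

Lemma enum_set2 (T : finType) (a b : T) : a != b ->
  enum [set a; b] = [:: a; b] \/ enum [set a; b] = [:: b; a].
Proof.
move=> ab; have := enum_uniq (mem [set a; b]); have := mem_enum (mem [set a; b]).
have : size (enum [set a; b]) = 2 by rewrite -cardE cards2 ab.
case: (enum _) => [|x [|y []]] //= _ xy_mem; rewrite inE andbT => xy.
have := xy_mem x; have := xy_mem y; rewrite !inE !eqxx ?orbT.
by do 2!move=> /esym/orP [] /eqP ?; subst; rewrite ?eqxx in xy ab *; auto.
Qed.

Section Trees.
Variables (V : finType) (adj : rel V).
Hypotheses (adj_sym : symmetric adj) (adj_irr : irreflexive adj).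
Hypothesis adj_connected : forall x y, connect adj x y.
Hypothesis card_edges : #|edges adj| = #|V| - 1.
Local Notation D := (dist adj).

Lemma walkP k x y :
  reflect (exists s, [/\ size s = k, path adj x s & last x s = y]) (walkb adj k x y).
Proof.
apply: (iffP existsP) => [[t /andP [p /eqP l]] | [s [sz p l]]].
  by exists (val t); rewrite size_tuple.
have st : size s == k by rewrite sz.
by exists (Tuple st); rewrite /= p l eqxx.
Qed.

Lemma walk0 x y : walkb adj 0 x y -> x = y.
Proof. by case/walkP => s [s0 _ <-]; case: s s0. Qed.

Lemma walk1 x y : adj x y -> walkb adj 1 x y.
Proof. by move=> xy; apply/walkP; exists [:: y]; rewrite /= xy. Qed.

Lemma walk_cat k l x y z : walkb adj k x y -> walkb adj l y z -> walkb adj (k + l) x z.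
Proof.
case/walkP => s [<- s_path s_last]; case/walkP => t [<- t_path t_last].
by apply/walkP; exists (s ++ t); rewrite size_cat cat_path last_cat s_last s_path t_path.
Qed.

Lemma walk_rev k x y : walkb adj k x y -> walkb adj k y x.
Proof.
move=> /walkP [s [<- s_path <-]]; apply/walkP; exists (rev (belast x s)); split.
- by rewrite size_rev size_belast.
- by move: s_path; rewrite rev_path (@eq_path _ _ adj).
- by case: s {s_path} => [|z s] //=; rewrite rev_cons last_rcons.
Qed.

Lemma dist_le k x y : walkb adj k x y -> (D x y <= k)%N.
Proof.
move=> w; have [k_lt|k_ge] := ltnP k #|V|; last first.
  by apply: leq_trans k_ge; rewrite -[X in (_ <= X)%N](size_iota 0) find_size.
by rewrite leqNgt; apply/negP => /(before_find 0); rewrite nth_iota // add0n w.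
Qed.

Lemma dist0 x : D x x = 0.
Proof. by apply/eqP; rewrite -leqn0 dist_le //; apply/walkP; exists [::]. Qed.

Lemma has_short_walk x y : has (fun k => walkb adj k x y) (iota 0 #|V|).
Proof.
have /connectP [p p_path ->] := adj_connected x y.
have [q q_path q_uniq _] := shortenP p_path.
apply/hasP; exists (size q); last by apply/walkP; exists q.
rewrite mem_iota add0n /=.
by have := max_card (mem (x :: q)); rewrite (card_uniqP q_uniq).
Qed.

Lemma dist_lt x y : (D x y < #|V|)%N.
Proof. by have := has_short_walk x y; rewrite has_find size_iota. Qed.

Lemma dist_walk x y : walkb adj (D x y) x y.
Proof. by have := nth_find 0 (has_short_walk x y); rewrite nth_iota ?add0n ?dist_lt. Qed.

Lemma dist_eq0 x y : D x y = 0 -> x = y.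
Proof. by move=> xy0; apply: walk0; rewrite -xy0 dist_walk. Qed.

Lemma dist_triangle x y z : (D x z <= D x y + D y z)%N.
Proof. by apply: dist_le; apply: walk_cat; apply: dist_walk. Qed.

Lemma dist_sym x y : D x y = D y x.
Proof.
by apply/anti_leq; rewrite !dist_le // walk_rev // dist_walk.
Qed.

Lemma dist_adj x y : adj x y -> D x y = 1.
Proof.
move=> xy; apply/eqP; rewrite eqn_leq dist_le ?walk1 // lt0n.
by apply: contraTneq xy => /dist_eq0 ->; rewrite adj_irr.
Qed.

Lemma adj_neq x y : adj x y -> x != y.
Proof. by apply: contraTneq => ->; rewrite adj_irr. Qed.

Lemma mem_edges x y : adj x y -> [set x; y] \in edges adj.
Proof. by move=> xy; apply/imset2P; exists x y; rewrite ?inE. Qed.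

Lemma edgesP e : e \in edges adj -> exists x y, adj x y /\ e = [set x; y].
Proof. by case/imset2P => x y _; rewrite inE => xy ->; exists x, y. Qed.

Lemma dist_adj_le r x y : adj x y -> (D r y <= (D r x).+1)%N.
Proof. by move=> xy; rewrite -addn1 -(dist_adj xy) dist_triangle. Qed.

Lemma exists_parent r y : y != r -> exists x, adj x y && ((D r x).+1 == D r y).
Proof.
move=> yr; have /walkP [s [s_size s_path s_last]] := dist_walk r y.
case/lastP: s s_size s_path s_last => [|s x]; first by move=> _ _ /eqP; rewrite eq_sym (negbTE yr).
rewrite size_rcons rcons_path last_rcons => s_size /andP [s_path sx] x_y; subst x.
exists (last r s); rewrite sx eqn_leq dist_adj_le // andbT -s_size ltnS.
by apply: dist_le; apply/walkP; exists s.
Qed.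

Definition parent r y := odflt y [pick x | adj x y && ((D r x).+1 == D r y)].

Lemma parentP r y : y != r -> adj (parent r y) y /\ (D r (parent r y)).+1 = D r y.
Proof.
move=> yr; rewrite /parent; case: pickP => [x /andP [xy /eqP] | none] //=.
by have [x] := exists_parent yr; rewrite none.
Qed.

Lemma edges_parent r e : e \in edges adj -> exists2 x, x != r & e = [set x; parent r x].
Proof.
pose h x := [set x; parent r x].
have h_inj : {in [set~ r] &, injective h}.
  move=> x y; rewrite !inE => xr yr /setP eq_xy.
  have [_ dx] := parentP xr; have [_ dy] := parentP yr.
  have := eq_xy x; rewrite !inE eqxx /= => /esym/orP [/eqP // | /eqP x_par].
  have := eq_xy y; rewrite !inE eqxx /= => /orP [/eqP y_x | /eqP y_par].
    by rewrite y_x.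
  by move: dx dy; rewrite -x_par -y_par => <-; lia.
have h_sub : h @: [set~ r] \subset edges adj.
  apply/subsetP => e' /imsetP [x]; rewrite !inE => xr ->.
  have [px_x _] := parentP xr; rewrite /h setUC.
  by apply/imset2P; exists (parent r x) x; rewrite ?inE.
have h_onto : h @: [set~ r] = edges adj.
  by apply/eqP; rewrite eqEcard h_sub card_edges (card_in_imset h_inj) cardsC1 subn1 /= leqnn.
by rewrite -h_onto => /imsetP [x]; rewrite !inE => xr ->; exists x.
Qed.

Lemma dist_adj_succ r x y : adj x y -> D r y = (D r x).+1 \/ D r x = (D r y).+1.
Proof.
move=> xy; have [z zr /set2_eq] := edges_parent r (mem_edges xy).
by case=> [[-> ->] | [-> ->]]; have [_ <-] := parentP zr; [right | left].
Qed.

Lemma parent_uniq r x y : adj x y -> y != r -> (D r x).+1 = D r y -> x = parent r y.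
Proof.
move=> xy yr dxy; have [z zr /set2_eq] := edges_parent r (mem_edges xy).
case=> [[xz yz] | [-> -> //]]; subst x y.
by have [_] := parentP zr; lia.
Qed.

Lemma odd_dist_adj r x y : adj x y -> odd (D r y) = ~~ odd (D r x).
Proof. by case/(dist_adj_succ r) => ->; rewrite /= ?negbK. Qed.

Lemma odd_walk r k x y : walkb adj k x y -> odd (D r y) = odd (D r x) (+) odd k.
Proof.
case/walkP => s [<- s_path <-]; elim: s x s_path => [|z s IHs] x /=; first by rewrite addbF.
by case/andP => xz /IHs ->; rewrite (odd_dist_adj r xz) addNb addbN.
Qed.

Lemma odd_dist r x y : odd (D x y) = odd (D r x) (+) odd (D r y).
Proof. by rewrite (odd_walk r (dist_walk x y)) addKb. Qed.

Lemma geodesic_uniq i j x y : D i x + D x j = D i j -> D i y + D y j = D i j ->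
  D i x = D i y -> x = y.
Proof.
move=> x_geo y_geo dixy.
suff by_dist_to_j u : forall x y, D x j = u -> D y j = u ->
    D i x + u = D i j -> D i y + u = D i j -> x = y.
  by apply: (by_dist_to_j (D x j)) => //; lia.
clear x_geo y_geo dixy x y.
elim: u => [|u IHu] x y xj yj x_geo y_geo.
  by rewrite (dist_eq0 xj) (dist_eq0 yj).
have step z : D z j = u.+1 -> D i z + u.+1 = D i j ->
    [/\ D (parent j z) j = u, D i (parent j z) + u = D i j & z = parent i (parent j z)].
  move=> zj z_geo; have zj_neq : z != j by apply/eqP => z_j; move: zj; rewrite z_j dist0.
  have [pz_z pz_dist] := parentP zj_neq; rewrite adj_sym in pz_z.
  have := dist_adj_le i pz_z; have := dist_triangle i (parent j z) j.
  rewrite !(dist_sym j) in pz_dist * => ? ?.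
  have pz_geo : D i (parent j z) = (D i z).+1 by lia.
  split; [lia | lia | apply: parent_uniq => //].
  by apply/eqP => pz_i; move: pz_geo; rewrite pz_i dist0.
have [pxj px_geo ->] := step x xj x_geo; have [pyj py_geo ->] := step y yj y_geo.
by rewrite (IHu _ _ pxj pyj px_geo py_geo).
Qed.

Local Notation E := (min4pc_entry adj).

Lemma min4pc_entry_swapl a b c e : E b a c e = E a b c e.
Proof. by rewrite /min4pc_entry (dist_sym b a); lia. Qed.

Lemma min4pc_entry_swapr a b c e : E a b e c = E a b c e.
Proof. by rewrite /min4pc_entry (dist_sym e c); lia. Qed.

Lemma min4pc_entryC a b c e : E a b c e = E c e a b.
Proof.
by rewrite /min4pc_entry (dist_sym c b) (dist_sym e a) (dist_sym c a) (dist_sym e b); lia.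
Qed.

Lemma min4pc_entry_diag a b : E a b a b = 0.
Proof. by rewrite /min4pc_entry !dist0; lia. Qed.

Lemma min4pc_entry_edges_neq a b c e : adj a b -> adj c e -> [set a; b] != [set c; e] ->
  E a b c e = 2.
Proof.
move=> ab ce ne; rewrite /min4pc_entry (dist_adj ab) (dist_adj ce).
have even_ae_bc : ~~ odd (D a e + D b c).
  rewrite oddD (dist_sym b c) (odd_dist_adj a ce) (odd_dist_adj c ab) (dist_sym c a).
  by rewrite addNb addbN negbK addbb.
have even_ac_be : ~~ odd (D a c + D b e).
  rewrite oddD (dist_sym b e) (odd_dist_adj e ab) (dist_sym e a) (odd_dist_adj a ce).
  by rewrite negbK addbb.
have ae_bc : D a e + D b c != 0.
  apply: contra ne; rewrite addn_eq0 => /andP [/eqP/dist_eq0 -> /eqP/dist_eq0 ->].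
  by rewrite setUC.
have ac_be : D a c + D b e != 0.
  by apply: contra ne; rewrite addn_eq0 => /andP [/eqP/dist_eq0 -> /eqP/dist_eq0 ->].
move: even_ae_bc even_ac_be ae_bc ac_be.
case: (D a e + D b c) => [|[|m]] //; case: (D a c + D b e) => [|[|k]] //; lia.
Qed.

Lemma min4pc_entry_pair_edge i j a b : (1 < D i j)%N -> adj a b ->
  E i j a b = (D i j).-1 \/ E i j a b = (D i j).+1.
Proof.
move=> d_gt1 ab; rewrite /min4pc_entry (dist_adj ab).
have odd_cross x y : adj x y -> odd (D i x + D j y) = ~~ odd (D i j).
  move=> xy; rewrite oddD (odd_dist_adj j xy) (odd_dist x i j) (dist_sym x i) (dist_sym j x).
  by rewrite addbN.
have cross_ge x y : adj x y -> (D i j <= (D i x + D j y).+1)%N.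
  move=> xy; rewrite adj_sym in xy; have := dist_adj_le j xy.
  by have := dist_triangle i x j; rewrite (dist_sym x j); lia.
have ba : adj b a by rewrite adj_sym.
have := odd_cross _ _ ab; have := odd_cross _ _ ba.
have := cross_ge _ _ ab; have := cross_ge _ _ ba.
move: (D i a + D j b) (D i b + D j a) => t2 t1 t1_ge t2_ge odd_t1 odd_t2.
have t1_neq : t1 != D i j by apply/eqP => t1_d; move: odd_t1; rewrite t1_d; case: odd.
have t2_neq : t2 != D i j by apply/eqP => t2_d; move: odd_t2; rewrite t2_d; case: odd.
lia.
Qed.

Lemma min4pc_entry_pair_edge_pred i j a b : adj a b -> E i j a b = (D i j).-1 ->
  (1 < D i j)%N -> exists x y, [/\ adj x y, [set a; b] = [set x; y] & (D i x + D y j).+1 = D i j].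
Proof.
move=> ab; rewrite /min4pc_entry (dist_adj ab) => entry_eq d_gt1.
have [cross_ab | cross_ba] : D i a + D j b = (D i j).-1 \/ D i b + D j a = (D i j).-1 by lia.
  by exists a, b; rewrite (dist_sym b j); split => //; lia.
by exists b, a; rewrite adj_sym setUC (dist_sym a j); split => //; lia.
Qed.

Definition geodesic_layer i j t := [set x | (D i x + D x j == D i j) && (t <= D i x <= t.+1)].

Lemma geodesic_layer_edge i j x y : adj x y -> (D i x + D y j).+1 = D i j ->
  [set x; y] = geodesic_layer i j (D i x).
Proof.
move=> xy xy_geo; have yx : adj y x by rewrite adj_sym.
have x_geo : D i x + D x j = D i j.
  have := dist_adj_le j yx; have := dist_triangle i x j.
  by rewrite !(dist_sym j); lia.
have y_geo : D i y = (D i x).+1.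
  by have := dist_adj_le i xy; have := dist_triangle i y j; lia.
apply/setP => z; rewrite !inE; apply/idP/idP.
  by case/orP => /eqP ->; lia.
case/andP => /eqP z_geo z_layer.
have [z_x | z_y] : D i z = D i x \/ D i z = D i y by lia.
  by rewrite (geodesic_uniq z_geo x_geo z_x) eqxx.
by rewrite (geodesic_uniq z_geo _ z_y) ?eqxx ?orbT //; lia.
Qed.

Lemma Min4PC_set2 x0 a b c e : a != b -> c != e ->
  Min4PC adj x0 [set a; b] [set c; e] = E a b c e.
Proof.
move=> ab ce; rewrite /Min4PC.
case: (enum_set2 ab) => ->; case: (enum_set2 ce) => -> /=;
  first [ done | by rewrite min4pc_entry_swapl | by rewrite min4pc_entry_swapr
        | by rewrite min4pc_entry_swapl min4pc_entry_swapr ].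
Qed.

Lemma card_edges_Min4PC_pred x0 i j : (1 < D i j)%N ->
  #|[set e in edges adj | Min4PC adj x0 [set i; j] e == (D i j).-1]| <= D i j.
Proof.
move=> d_gt1; have ij : i != j by apply/eqP => i_j; move: d_gt1; rewrite i_j dist0.
rewrite -[X in (_ <= X)%N]card_ord.
apply: leq_trans (leq_imset_card (fun t : 'I_(D i j) => geodesic_layer i j t) _).
apply: subset_leq_card; apply/subsetP => e; rewrite inE => /andP [/edgesP [a [b [ab ->]]]].
have a_neq_b : a != b by apply/eqP => a_b; move: ab; rewrite a_b adj_irr.
rewrite Min4PC_set2 // => /eqP /(min4pc_entry_pair_edge_pred ab) /(_ d_gt1).
case=> [x [y [xy -> xy_geo]]].
have x_lt : (D i x < D i j)%N by lia.
by rewrite (geodesic_layer_edge xy xy_geo); apply/imsetP; exists (Ordinal x_lt).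
Qed.

Section Rows.
Variables (i j : V).
Hypothesis d_gt1 : (1 < D i j)%N.
Let f := [set i; j].
Let B := f |: edges adj.

Lemma neq_ij : i != j.
Proof. by apply: contraTneq d_gt1 => ->; rewrite dist0. Qed.

Lemma f_notin_edges : f \notin edges adj.
Proof.
apply/negP => /edgesP [x [y [xy /set2_eq [[ix jy] | [iy jx]]]]]; subst x y.
  by move: d_gt1; rewrite (dist_adj xy).
by move: d_gt1; rewrite dist_sym (dist_adj xy).
Qed.

Lemma card_rows : #|B| = #|V|.
Proof.
rewrite cardsU1 f_notin_edges card_edges add1n subn1 prednK //.
by apply/card_gt0P; exists i.
Qed.

Lemma rowsP p : p \in B -> exists a b, a != b /\ p = [set a; b].
Proof.
case/setU1P => [-> | /edgesP [a [b [ab ->]]]]; first by exists i, j; rewrite neq_ij.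
by exists a, b; rewrite adj_neq.
Qed.

Lemma Min4PC_rowsC p q : p \in B -> q \in B -> Min4PC adj i p q = Min4PC adj i q p.
Proof.
move=> /rowsP [a [b [ab ->]]] /rowsP [c [e [ce ->]]].
by rewrite !Min4PC_set2 // min4pc_entryC.
Qed.

Lemma Min4PC_rows_diag p : p \in B -> Min4PC adj i p p = 0.
Proof. by move=> /rowsP [a [b [ab ->]]]; rewrite Min4PC_set2 // min4pc_entry_diag. Qed.

Lemma Min4PC_edges_neq p q : p \in edges adj -> q \in edges adj -> p != q ->
  Min4PC adj i p q = 2.
Proof.
move=> /edgesP [a [b [ab ->]]] /edgesP [c [e [ce ->]]] pq.
by rewrite Min4PC_set2 ?adj_neq // min4pc_entry_edges_neq.
Qed.

Lemma Min4PC_pair_edge e : e \in edges adj ->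
  Min4PC adj i f e = (D i j).-1 \/ Min4PC adj i f e = (D i j).+1.
Proof.
move=> /edgesP [a [b [ab ->]]].
by rewrite Min4PC_set2 ?neq_ij ?adj_neq //; apply: min4pc_entry_pair_edge.
Qed.

Local Open Scope ring_scope.
Variable R : realType.
Variable f0 : 'I_#|B|.
Hypothesis f0_val : enum_val f0 = f.

Lemma enum_val_edges a : a != f0 -> enum_val a \in edges adj.
Proof.
move=> af; case/setU1P: (enum_valP a) => // a_f.
by rewrite -f0_val in a_f; rewrite (enum_val_inj a_f) eqxx in af.
Qed.

Lemma Min4PC_sub_bordered :
  Min4PC_sub R adj i B = bordered_mx f0 (fun a => (Min4PC adj i f (enum_val a))%:R).
Proof.
apply/matrixP => a b; rewrite !mxE.
have [<- | ab] := eqVneq a b; first by rewrite Min4PC_rows_diag ?enum_valP.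
have [-> | af] := eqVneq a f0; first by rewrite f0_val.
have [-> | bf] := eqVneq b f0; first by rewrite f0_val Min4PC_rowsC ?enum_valP ?setU11.
rewrite Min4PC_edges_neq ?enum_val_edges //.
by apply: contra ab => /eqP/enum_val_inj ->.
Qed.

Lemma Min4PC_sub_inertia : exists s : seq R,
  eigenvalues_are (Min4PC_sub R adj i B) s /\
  count (fun x => x < 0) s = (#|V| - 1)%N /\ count (fun x => 0 < x) s = 1%N.
Proof.
pose K := [set a : 'I_#|B| | Min4PC adj i f (enum_val a) == (D i j).-1].
pose d : R := (D i j)%:R.
have v_f0 : (Min4PC adj i f (enum_val f0))%:R = 0 :> R.
  by rewrite f0_val Min4PC_rows_diag ?setU11.
have f0_notin_K : f0 \notin K by rewrite inE f0_val Min4PC_rows_diag ?setU11 //; lia.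
have v_ne a : a != f0 -> (Min4PC adj i f (enum_val a))%:R = if a \in K then d - 1 else d + 1.
  move=> af; rewrite inE /d.
  case: (Min4PC_pair_edge (enum_val_edges af)) => ->; first by rewrite eqxx -subn1 natrB //; lia.
  by rewrite -natr1 ifN //; lia.
have d_gt1' : 1 < d by rewrite ltr1n.
have d_le : d <= (#|B|.-1)%:R.
  by rewrite ler_nat card_rows -ltnS prednK ?dist_lt // (leq_ltn_trans _ (dist_lt i j)).
have card_K : (#|K|%:R <= d)%R.
  rewrite ler_nat -(card_imset _ enum_val_inj); apply: leq_trans (card_edges_Min4PC_pred i d_gt1).
  apply/subset_leq_card/subsetP => _ /imsetP [a a_K ->]; rewrite inE.
  have af : a != f0 by apply: contraTneq a_K => ->.
  by move: a_K; rewrite inE enum_val_edges.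
have [s [s_eig s_neg_pos]] := bordered_mx_inertia v_f0 v_ne f0_notin_K d_gt1' d_le card_K.
by exists s; rewrite Min4PC_sub_bordered -card_rows subn1.
Qed.

End Rows.

End Trees.

Local Open Scope ring_scope.

Theorem theorem3p1 (R : realType) (V : finType) (adj : rel V) (i j : V) :
  is_tree adj ->
  (1 < dist adj i j)%N ->
  let B := [set i; j] |: edges adj in
  exists s : seq R,
    eigenvalues_are (Min4PC_sub R adj i B) s /\
    count (fun x => x < 0) s = (#|V| - 1)%N /\
    count (fun x => 0 < x) s = 1%N.
Proof.
move=> [adj_sym [adj_irr [adj_connected card_edges]]] d_gt1 B.
have f_in_B : [set i; j] \in B := setU11 _ _.
exact: (Min4PC_sub_inertia adj_sym adj_irr adj_connected card_edges d_gt1 R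
  (enum_rankK_in f_in_B f_in_B)).
Qed.
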